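(* Let $p$ and $q$ be distinct primes. Suppose $G$ is a finite non-abelian semi-direct product of a normal abelian Sylow $p$-subgroup $P$ by a cyclic $q$-complement $Q$. Suppose that $P$ is a direct product of cyclic groups of order $p^m$ for some positive integer $m$, that $|G:\mathbf{C}_G(P)|=q$, and that $Q$ acts (by conjugation) non-trivially and irreducibly on $P/P^p$. Then $G$ is exponent-critical.
   Context: A finite group $G$ is exponent-critical if $\exp(G)$ is not the least common multiple of the exponents of the proper non-abelian subgroups of $G$. $P^p$ denotes the subgroup of $P$ generated by the $p$-th powers. *)

From mathcomp Require Import all_boot all_fingroup all_solvable.
Set Implicit Arguments. Unset Strict Implicit. Unset Printing Implicit Defensive.
Local Open Scope group_scope.

Definition pow_subgroup (gT : finGroupType) (P : {set gT}) (p : nat) : {set gT} :=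
  <<[set x ^+ p | x in P]>>.

Definition exponent_critical (gT : finGroupType) (G : {group gT}) : bool :=
  exponent G !=
  \big[lcmn/1%N]_(H : {group gT} | (H \proper G) && ~~ abelian H) exponent H.

From mathcomp Require Import all_boot all_fingroup all_solvable.
Set Implicit Arguments. Unset Strict Implicit. Unset Printing Implicit Defensive.
Local Open Scope group_scope.

(* Let H be a proper non-abelian subgroup. Since 'C_G(P) = P * (Q :&: 'C_G(P))
   is abelian of prime index, H is not contained in it, so G = H <*> 'C_G(P)
   normalises H :&: P. If H :&: P were not inside 'Phi(P) = 'Mho^1(P),
   irreducibility on the Frattini quotient would force P \subset H; as G / P is
   a cyclic q-group, H would then contain 'C_G(P) and be all of G. Hence
   H :&: P has exponent dividing p ^ m.-1, so exponent H divides
   p ^ m.-1 * #|G : P|, which the p-part p ^ m of exponent G does not divide. *)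

Section GeneralFacts.

Variable gT : finGroupType.
Implicit Types (p n k : nat) (G H K M N P Q : {group gT}).

Lemma cyclic_pgroup_sub_total p Q H K :
  p.-group Q -> cyclic Q -> H \subset Q -> K \subset Q ->
  (H \subset K) || (K \subset H).
Proof.
move=> pQ cycQ sHQ sKQ.
rewrite -(cardSg_cyclic cycQ sHQ sKQ) -(cardSg_cyclic cycQ sKQ sHQ).
rewrite (card_pgroup (pgroupS sHQ pQ)) (card_pgroup (pgroupS sKQ pQ)).
by case/orP: (leq_total (logn p #|H|) (logn p #|K|)) => /dvdn_exp2l->; rewrite ?orbT.
Qed.

Lemma maximal_joing_eq M G H :
  maximal M G -> H \subset G -> ~~ (H \subset M) -> H <*> M = G.
Proof.
case/maxgroupP=> /proper_sub sMG maxM sHG nsHM.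
have sHMG : H <*> M \subset G by rewrite join_subG sHG.
apply/eqP; rewrite eqEproper sHMG /=; apply: contra nsHM => ltHMG.
by rewrite -(maxM _ ltHMG (joing_subr _ _)) joing_subl.
Qed.

Lemma mem_expg_indexg N G x : N <| G -> x \in G -> x ^+ #|G : N| \in N.
Proof.
case/andP=> _ nNG Gx; have Nx := subsetP nNG x Gx.
apply: coset_idr; first by rewrite groupX.
by rewrite morphX // -card_quotient // expg_cardG // mem_quotient.
Qed.

Lemma exponent_Mho_abelian p n k P :
  p.-group P -> abelian P -> exponent P %| p ^ (n + k) ->
  exponent 'Mho^n(P) %| p ^ k.
Proof.
move=> pP cPP expP; rewrite (MhoEabelian n pP cPP).
apply/exponentP=> _ /imsetP[x Px ->].
rewrite -expgM -expnD; exact: (exponentP expP).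
Qed.

Lemma abelian_cent_mulg P Q G :
  P * Q = G -> abelian P -> abelian Q -> abelian 'C_G(P).
Proof.
move=> defG cPP cQQ; set C := 'C_G(P).
have sPC : P \subset C by rewrite subsetI -defG mulG_subl.
have defC : P * (Q :&: C) = C by rewrite group_modl // defG; apply/setIidPr/subsetIl.
rewrite -defC abelianM cPP (abelianS (subsetIl _ _) cQQ).
exact: subset_trans (subsetIr Q C) (subsetIr G 'C(P)).
Qed.

Lemma acts_irreducibly_Phi_eq P Q K :
  acts_irreducibly (Q / 'Phi(P)) (P / 'Phi(P)) 'J ->
  K \subset P -> Q \subset 'N(K) -> ~~ (K \subset 'Phi(P)) -> K :=: P.
Proof.
case/mingroupP=> _ minP sKP nKQ nsKPhi.
have nPhiP := normal_norm (Phi_normal P).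
have nPhiK := subset_trans sKP nPhiP.
have eqKP : K / 'Phi(P) = P / 'Phi(P).
  apply: minP (quotientS _ sKP); rewrite /= astabsJ quotient_norms // andbT.
  by rewrite -subG1 quotient_sub1.
have sPKPhi : P \subset K <*> 'Phi(P).
  by rewrite -(quotientSGK nPhiP) ?joing_subr // quotientYidr // eqKP.
rewrite -(genGid K); apply: Phi_nongen; apply/eqP.
by rewrite eqEsubset join_subG Phi_sub sKP joingC.
Qed.

End GeneralFacts.

Section ProperNonabelianSubgroups.

Variables (gT : finGroupType) (q : nat) (G P Q : {group gT}).
Hypotheses (nPG : P <| G) (cPP : abelian P) (qQ : q.-group Q) (cycQ : cyclic Q).
Hypotheses (defG : P ><| Q = G) (prime_iCG : prime #|G : 'C_G(P)|).
Hypothesis irrQ : acts_irreducibly (Q / 'Phi(P)) (P / 'Phi(P)) 'J.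

Implicit Types H : {group gT}.

Local Notation C := 'C_G(P).

Let defPQ : P * Q = G := sdprodW defG.
Let sQG : Q \subset G. Proof. by rewrite -defPQ mulG_subr. Qed.
Let nPG' : G \subset 'N(P) := normal_norm nPG.
Let sCG : C \subset G := subsetIl G 'C(P).
Let sPC : P \subset C. Proof. by rewrite subsetI normal_sub. Qed.
Let maxC : maximal C G := p_index_maximal sCG prime_iCG.

Lemma norm_setI_not_cent H : H \subset G -> ~~ (H \subset C) -> G \subset 'N(H :&: P).
Proof.
move=> sHG nsHC; rewrite -(maximal_joing_eq maxC sHG nsHC) join_subG.
rewrite normsI ?normG ?(subset_trans sHG nPG') // cents_norm //.
exact: centsS (subsetIr H P) (subsetIr G 'C(P)).
Qed.

Lemma overgroup_not_cent_eq H : P \subset H -> H \subset G -> ~~ (H \subset C) -> H :=: G.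
Proof.
move=> sPH sHG nsHC.
have sCH : C \subset H.
  have qGP : q.-group (G / P) by rewrite -defPQ quotientMidl quotient_pgroup.
  have cycGP : cyclic (G / P) by rewrite -defPQ quotientMidl quotient_cyclic.
  have := cyclic_pgroup_sub_total qGP cycGP (quotientS P sHG) (quotientS P sCG).
  rewrite !quotientSGK ?(subset_trans sHG nPG') ?(subset_trans sCG nPG') //.
  by rewrite (negbTE nsHC).
apply/eqP; rewrite eqEproper sHG /=; apply: contra nsHC => ltHG.
by case/maxgroupP: maxC => _ /(_ H ltHG sCH) ->.
Qed.

Lemma proper_nonabelian_setI_sub_Phi H :
  H \proper G -> ~~ abelian H -> H :&: P \subset 'Phi(P).
Proof.
move=> ltHG nabH; have sHG := proper_sub ltHG.
have cCC : abelian C := abelian_cent_mulg defPQ cPP (cyclic_abelian cycQ).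
have nsHC : ~~ (H \subset C) by apply: contra nabH => sHC; exact: abelianS sHC cCC.
apply: contraTT ltHG => nsKPhi.
have nKQ := subset_trans sQG (norm_setI_not_cent sHG nsHC).
have defK := acts_irreducibly_Phi_eq irrQ (subsetIr H P) nKQ nsKPhi.
have sPH : P \subset H by rewrite -defK subsetIl.
by rewrite (overgroup_not_cent_eq sPH sHG nsHC) properxx.
Qed.

Lemma exponent_proper_nonabelian (p k : nat) H :
  p.-group P -> exponent P %| p ^ k.+1 -> H \proper G -> ~~ abelian H ->
  exponent H %| p ^ k * #|G : P|.
Proof.
move=> pP expP ltHG nabH; apply/exponentP=> x Hx; rewrite mulnC expgM.
apply: (exponentP (exponent_Mho_abelian (n := 1) pP cPP expP)).
rewrite -(Phi_Mho pP cPP); apply: (subsetP (proper_nonabelian_setI_sub_Phi ltHG nabH)).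
by rewrite inE groupX // mem_expg_indexg // (subsetP (proper_sub ltHG)).
Qed.

End ProperNonabelianSubgroups.

Theorem mainTheorem8 (gT : finGroupType) (p q m : nat) (G P Q : {group gT}) :
  prime p -> prime q -> p != q ->
  ~~ abelian G ->
  P \in 'Syl_p(G) -> P <| G -> abelian P ->
  q.-group Q -> cyclic Q -> P ><| Q = G ->
  (0 < m)%N -> homocyclic P -> exponent P = (p ^ m)%N ->
  #|G : 'C_G(P)| = q ->
  ~~ (Q / pow_subgroup P p \subset 'C(P / pow_subgroup P p)) ->
  acts_irreducibly (Q / pow_subgroup P p) (P / pow_subgroup P p) 'J ->
  exponent_critical G.
Proof.
move=> pr_p pr_q _ _ sylP nPG cPP qQ cycQ defG m_gt0 _ expP iCG _ irrQ.
have /and3P[_ pP p'iP] : p.-Hall(G) P by rewrite inE in sylP.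
have PhiE : pow_subgroup P p = 'Phi(P) by rewrite (Phi_Mho pP cPP) (MhoE 1 pP) expn1.
rewrite PhiE in irrQ; rewrite -iCG in pr_q.
case: m m_gt0 expP => // k _ expP; apply/eqP=> expG.
have expPk : exponent P %| p ^ k.+1 by rewrite expP.
have : exponent P %| p ^ k * #|G : P|.
  rewrite (dvdn_trans (exponentS (normal_sub nPG))) // expG.
  apply/dvdn_biglcmP=> H /andP[ltHG nabH].
  exact: (exponent_proper_nonabelian nPG cPP qQ cycQ defG pr_q irrQ pP expPk ltHG nabH).
rewrite Gauss_dvdl; last by rewrite (pnat_coprime _ p'iP) ?pnat_exponent.
by rewrite expP dvdn_Pexp2l ?prime_gt1 // ltnn.
Qed.
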